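(* Let $p(t)=\sum_{k=0}^\infty a_kt^k$ be a real power series with $-1<a_i<1$ for all $i\ge0$ and $\sum_{i=0}^\infty|a_i|\le1$, and let $p^{[1]}=p$, $p^{[n+1]}=p(p^{[n]})$, $p^{[n]}(t)=\sum_k a_k^{[n]}t^k$. If $\lim_{n\to\infty}p^{[n]}(0)=\lim_{n\to\infty}a_0^{[n]}=a$ exists, then $\lim_{n\to\infty}p^{[n]}(t)=a$ for every $t\in(-1,1)$. *)

From Stdlib Require Import Reals.
From Coquelicot Require Import Coquelicot.
Open Scope R_scope.

Definition pseries_fun (a : nat -> R) (t : R) : R :=
  Series (fun k => a k * t ^ k).

Definition piter (a : nat -> R) (n : nat) : R -> R :=
  Nat.iter n (pseries_fun a).

From Stdlib Require Import Reals Lra Lia Classical.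
From Coquelicot Require Import Coquelicot.
Open Scope R_scope.

(* Let lcoord be the primitive of 1 / (1 - |s|) vanishing at 0.  The coefficient
   bound gives, for every m >= 2, the Schwarz-Pick type estimate
   |p'(u)| (1 - |u|) + |a_m| (1 - |u|)^2 <= 1 - |p(u)|, so p does not expand the
   distance |lcoord x - lcoord y| and the orbits of t and 0 stay at bounded distance.
   If p^[n](0) tends to +-1, lcoord blows up there and drags p^[n](t) to the same
   endpoint.  If the limit is interior, both orbits eventually stay in some
   [-R0, R0], on which p contracts the distance by the factor 1 - |a_m| (1 - R0)^2
   unless p is affine; in the affine case p^[n](t) - p^[n](0) = a_1^n t. *)

Lemma ln_le_sub_1 (y : R) : 0 < y -> ln y <= y - 1.
Proof.
  intros Hy. pose proof (exp_ineq1_le (ln y)) as H. rewrite exp_ln in H; lra.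
Qed.

Lemma neg_ln_one_sub_bounds (s : R) : 0 <= s < 1 -> s <= - ln (1 - s) <= s / (1 - s).
Proof.
  intros Hs. split.
  - pose proof (ln_le_sub_1 (1 - s)). lra.
  - assert (Hinv : 0 < / (1 - s)) by (apply Rinv_0_lt_compat; lra).
    pose proof (ln_le_sub_1 _ Hinv) as H. rewrite ln_Rinv in H by lra.
    replace (s / (1 - s)) with (/ (1 - s) - 1) by (field; lra). lra.
Qed.

Lemma exp_le_exp (x y : R) : x <= y -> exp x <= exp y.
Proof.
  intros [Hlt | ->]; [left; apply exp_increasing; exact Hlt | lra].
Qed.

Lemma is_derive_of_sub_le_sq (f : R -> R) (x l M d : R) : 0 <= M -> 0 < d ->
  (forall h, Rabs h < d -> Rabs (f (x + h) - f x - l * h) <= M * h ^ 2) ->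
  is_derive f x l.
Proof.
  intros HM Hd Hf. apply is_derive_Reals. intros eps Heps.
  assert (Hdelta : 0 < Rmin d (eps / (M + 1))).
  { apply Rmin_pos; [lra | apply Rdiv_lt_0_compat; lra]. }
  exists (mkposreal _ Hdelta). intros h Hh0 Hh. simpl in Hh.
  pose proof (Rmin_l d (eps / (M + 1))). pose proof (Rmin_r d (eps / (M + 1))).
  assert (Habs : 0 < Rabs h) by (apply Rabs_pos_lt; exact Hh0).
  replace ((f (x + h) - f x) / h - l) with ((f (x + h) - f x - l * h) / h) by (field; exact Hh0).
  rewrite Rabs_div by exact Hh0.
  apply Rle_lt_trans with (M * Rabs h).
  - apply Rmult_le_reg_r with (Rabs h); [exact Habs|].
    unfold Rdiv. rewrite Rmult_assoc, Rinv_l, Rmult_1_r by lra.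
    replace (M * Rabs h * Rabs h) with (M * Rabs h ^ 2) by ring. rewrite pow2_abs.
    apply Hf. lra.
  - assert (M * Rabs h <= M * (eps / (M + 1))) by (apply Rmult_le_compat_l; lra).
    assert (M * (eps / (M + 1)) < eps).
    { apply Rmult_lt_reg_r with (M + 1); [lra|].
      replace (M * (eps / (M + 1)) * (M + 1)) with (M * eps) by (field; lra). nra. }
    lra.
Qed.

Lemma Rmult_inv_le_cross (x y k z : R) : 0 < y -> 0 < z -> x * z <= k * y -> x * / y <= k * / z.
Proof.
  intros Hy Hz Hxz. apply Rmult_le_reg_r with (y * z); [apply Rmult_lt_0_compat; assumption|].
  replace (x * / y * (y * z)) with (x * z) by (field; lra).
  replace (k * / z * (y * z)) with (k * y) by (field; lra).
  exact Hxz.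
Qed.

Lemma nondecreasing_of_derive (f df : R -> R) (y x : R) : y <= x ->
  (forall s, y <= s <= x -> is_derive f s (df s) /\ 0 <= df s) -> f y <= f x.
Proof.
  intros Hyx Hd.
  destruct (MVT_gen f y x df) as [c [Hc Heq]].
  - intros s Hs. rewrite Rmin_left, Rmax_right in Hs by lra. apply Hd. lra.
  - intros s Hs. rewrite Rmin_left, Rmax_right in Hs by lra.
    apply continuity_pt_filterlim, (ex_derive_continuous (V := R_NormedModule)).
    exists (df s). apply Hd. lra.
  - rewrite Rmin_left, Rmax_right in Hc by lra.
    assert (0 <= df c * (x - y)) by (apply Rmult_le_pos; [apply Hd; lra | lra]). lra.
Qed.

Lemma Rabs_sub_le_of_derive (f g df dg : R -> R) (k y x : R) : y <= x ->
  (forall s, y <= s <= x ->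
     is_derive f s (df s) /\ is_derive g s (dg s) /\ Rabs (dg s) <= k * df s) ->
  Rabs (g x - g y) <= k * (f x - f y).
Proof.
  intros Hyx Hd.
  assert (Hminus : k * f y - g y <= k * f x - g x).
  { apply (nondecreasing_of_derive (fun s => k * f s - g s) (fun s => k * df s - dg s) y x Hyx).
    intros s Hs. destruct (Hd s Hs) as (Hf & Hg & Hb). split.
    - apply (is_derive_minus (fun s => k * f s) g); [apply is_derive_scal|]; assumption.
    - pose proof (Rle_abs (dg s)). lra. }
  assert (Hplus : k * f y + g y <= k * f x + g x).
  { apply (nondecreasing_of_derive (fun s => k * f s + g s) (fun s => k * df s + dg s) y x Hyx).
    intros s Hs. destruct (Hd s Hs) as (Hf & Hg & Hb). split.
    - apply (is_derive_plus (fun s => k * f s) g); [apply is_derive_scal|]; assumption.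
    - pose proof (Rle_abs (- dg s)). rewrite Rabs_Ropp in *. lra. }
  apply Rabs_le. lra.
Qed.

Lemma is_lim_seq_of_contracting (d : nat -> R) (q : R) (N : nat) : 0 <= q < 1 ->
  (forall n, 0 <= d n) -> (forall n, (N <= n)%nat -> d (S n) <= q * d n) ->
  is_lim_seq d 0.
Proof.
  intros Hq Hd Hstep.
  assert (Hgeom : forall k, d (k + N)%nat <= q ^ k * d N).
  { induction k as [|k IH]; simpl; [lra|].
    apply Rle_trans with (q * d (k + N)%nat); [apply Hstep; lia|].
    rewrite Rmult_assoc. apply Rmult_le_compat_l; lra. }
  apply (is_lim_seq_incr_n _ N).
  apply is_lim_seq_le_le with (u := fun _ => 0) (w := fun k => q ^ k * d N).
  - intros k. split; [apply Hd | apply Hgeom].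
  - apply is_lim_seq_const.
  - replace (Finite 0) with (Rbar_mult 0 (d N)) by (simpl; f_equal; ring).
    apply is_lim_seq_scal_r, is_lim_seq_geom. rewrite Rabs_pos_eq; lra.
Qed.

Definition lcoord (u : R) : R := if Rle_dec 0 u then - ln (1 - u) else ln (1 + u).

Lemma lcoord_opp (u : R) : lcoord (- u) = - lcoord u.
Proof.
  unfold lcoord. destruct (Rle_dec 0 (- u)), (Rle_dec 0 u).
  - replace u with 0 by lra. rewrite Ropp_0, Rminus_0_r, ln_1. ring.
  - replace (1 - - u) with (1 + u) by ring. reflexivity.
  - replace (1 + - u) with (1 - u) by ring. ring.
  - lra.
Qed.

Lemma lcoord_nonneg_sub_id (s : R) : 0 <= s < 1 -> 0 <= lcoord s - s <= s ^ 2 / (1 - s).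
Proof.
  intros Hs. unfold lcoord. destruct (Rle_dec 0 s) as [_|]; [|lra].
  pose proof (neg_ln_one_sub_bounds s Hs).
  replace (s ^ 2 / (1 - s)) with (s / (1 - s) - s) by (field; lra). lra.
Qed.

Lemma Rabs_lcoord_sub_id (h : R) : Rabs h < 1 -> Rabs (lcoord h - h) <= h ^ 2 / (1 - Rabs h).
Proof.
  intros Hh. rewrite <- pow2_abs.
  destruct (Rle_dec 0 h) as [Hh0 | Hh0].
  - rewrite (Rabs_pos_eq h) in * by lra.
    pose proof (lcoord_nonneg_sub_id h (conj Hh0 Hh)). rewrite Rabs_pos_eq; lra.
  - rewrite (Rabs_left h) in * by lra.
    pose proof (lcoord_nonneg_sub_id (- h) ltac:(lra)) as H.
    rewrite lcoord_opp in H. rewrite Rabs_left1; lra.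
Qed.

Lemma Rabs_lcoord (u : R) : Rabs u < 1 -> Rabs (lcoord u) = - ln (1 - Rabs u).
Proof.
  intros Hu. apply Rabs_lt_between in Hu. destruct (Rle_dec 0 u) as [Hu0 | Hu0].
  - rewrite (Rabs_pos_eq u) by lra. pose proof (lcoord_nonneg_sub_id u ltac:(lra)).
    rewrite Rabs_pos_eq by lra. unfold lcoord. destruct (Rle_dec 0 u); [reflexivity | lra].
  - replace (lcoord u) with (- lcoord (- u)) by (rewrite lcoord_opp; ring).
    rewrite Rabs_Ropp, (Rabs_left u) by lra.
    pose proof (lcoord_nonneg_sub_id (- u) ltac:(lra)).
    rewrite Rabs_pos_eq by lra. unfold lcoord. destruct (Rle_dec 0 (- u)); [reflexivity | lra].
Qed.

Lemma is_derive_lcoord_0 : is_derive lcoord 0 1.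
Proof.
  apply (is_derive_of_sub_le_sq _ _ _ 2 (1 / 2)); [lra | lra |].
  intros h Hh. rewrite Rplus_0_l.
  replace (lcoord 0) with 0 by (unfold lcoord; destruct (Rle_dec 0 0); [|lra];
    rewrite Rminus_0_r, ln_1; ring).
  replace (lcoord h - 0 - 1 * h) with (lcoord h - h) by ring.
  apply Rle_trans with (h ^ 2 / (1 - Rabs h)); [apply Rabs_lcoord_sub_id; lra|].
  rewrite (Rmult_comm 2). apply Rmult_le_compat_l; [apply pow2_ge_0|].
  replace 2 with (/ (1 / 2)) by field. apply Rinv_le_contravar; lra.
Qed.

Lemma is_derive_lcoord (u : R) : Rabs u < 1 -> is_derive lcoord u (/ (1 - Rabs u)).
Proof.
  intros Hu. apply Rabs_lt_between in Hu. destruct (Rtotal_order u 0) as [Hneg | [-> | Hpos]].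
  - apply is_derive_ext_loc with (f := fun y => ln (1 + y)).
    + apply (locally_interval _ u m_infty 0); [exact I | exact Hneg|].
      intros y _ Hy. unfold lcoord. destruct (Rle_dec 0 y); [simpl in Hy; lra | reflexivity].
    + rewrite Rabs_left by exact Hneg. auto_derive; [lra | field; lra].
  - rewrite Rabs_R0, Rminus_0_r, Rinv_1. exact is_derive_lcoord_0.
  - apply is_derive_ext_loc with (f := fun y => - ln (1 - y)).
    + apply (locally_interval _ u 0 p_infty); [exact Hpos | exact I|].
      intros y Hy _. unfold lcoord. destruct (Rle_dec 0 y); [reflexivity | simpl in Hy; lra].
    + rewrite Rabs_pos_eq by lra. auto_derive; [lra | field; lra].
Qed.

Lemma lcoord_expanding (x y : R) : -1 < y -> y <= x -> x < 1 -> x - y <= lcoord x - lcoord y.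
Proof.
  intros Hy Hyx Hx.
  apply Rle_trans with (Rabs (x - y)); [apply Rle_abs|].
  rewrite <- (Rmult_1_l (lcoord x - lcoord y)).
  apply (Rabs_sub_le_of_derive lcoord (fun s => s) (fun s => / (1 - Rabs s)) (fun _ => 1) 1 y x
    Hyx).
  intros s Hs. assert (Habs : Rabs s < 1) by (apply Rabs_def1; lra). split; [|split].
  - apply is_derive_lcoord, Habs.
  - apply (is_derive_id (K := R_AbsRing)).
  - rewrite Rabs_R1, Rmult_1_l, <- Rinv_1.
    apply Rinv_le_contravar; [|pose proof (Rabs_pos s)]; lra.
Qed.

Lemma Rabs_sub_le_lcoord (x y : R) : Rabs x < 1 -> Rabs y < 1 ->
  Rabs (x - y) <= Rabs (lcoord x - lcoord y).
Proof.
  intros Hx Hy. apply Rabs_lt_between in Hx. apply Rabs_lt_between in Hy.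
  destruct (Rle_dec y x) as [Hyx | Hxy].
  - pose proof (lcoord_expanding x y ltac:(lra) Hyx ltac:(lra)). rewrite !Rabs_pos_eq; lra.
  - pose proof (lcoord_expanding y x ltac:(lra) ltac:(lra) ltac:(lra)).
    rewrite (Rabs_minus_sym x), (Rabs_minus_sym (lcoord x)), !Rabs_pos_eq; lra.
Qed.

Lemma exp_neg_lcoord (w : R) : 0 <= w < 1 -> exp (- lcoord w) = 1 - w.
Proof.
  intros Hw. unfold lcoord. destruct (Rle_dec 0 w); [|lra].
  rewrite Ropp_involutive. apply exp_ln. lra.
Qed.

Lemma one_sub_le_exp_neg_lcoord (z : R) : Rabs z < 1 -> 1 - z <= 2 * exp (- lcoord z).
Proof.
  intros Hz. apply Rabs_lt_between in Hz. destruct (Rle_dec 0 z).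
  - rewrite exp_neg_lcoord by lra. lra.
  - unfold lcoord. destruct (Rle_dec 0 z); [lra|].
    rewrite exp_Ropp, exp_ln by lra.
    assert (1 <= / (1 + z)) by (rewrite <- Rinv_1; apply Rinv_le_contravar; lra). lra.
Qed.

Lemma Rabs_le_of_Rabs_lcoord_le (u K : R) : Rabs u < 1 -> Rabs (lcoord u) <= K ->
  Rabs u <= 1 - exp (- K).
Proof.
  intros Hu HK.
  pose proof (exp_le_exp (- K) (- Rabs (lcoord u)) ltac:(lra)) as H.
  rewrite Rabs_lcoord, Ropp_involutive, exp_ln in H by lra. lra.
Qed.

Lemma is_lim_seq_1_of_lcoord_close (z w : nat -> R) (C : R) :
  (forall n, Rabs (z n) < 1) -> (forall n, Rabs (w n) < 1) ->
  (forall n, Rabs (lcoord (z n) - lcoord (w n)) <= C) ->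
  is_lim_seq w 1 -> is_lim_seq z 1.
Proof.
  intros Hz Hw HC Hlim.
  assert (Hz1 : forall n, z n < 1) by (intros n; apply (Rabs_lt_between (z n)), Hz).
  assert (Hw1 : forall n, w n < 1) by (intros n; apply (Rabs_lt_between (w n)), Hw).
  assert (Hpos : eventually (fun n => 0 <= w n)).
  { destruct (proj2 (is_lim_seq_spec _ _) Hlim (mkposreal 1 Rlt_0_1)) as [N HN].
    exists N. intros n Hn. specialize (HN n Hn). simpl in HN. apply Rabs_def2 in HN. lra. }
  apply is_lim_seq_le_le_loc with (u := fun n => 1 - 2 * exp C * (1 - w n)) (w := fun _ => 1).
  - destruct Hpos as [N HN]. exists N. intros n Hn. split; [|apply Rlt_le, Hz1].
    assert (Hexp : exp (- lcoord (z n)) <= exp C * (1 - w n)).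
    { rewrite <- (exp_neg_lcoord (w n)), <- exp_plus by (split; [apply HN, Hn | apply Hw1]).
      apply exp_le_exp. specialize (HC n). apply Rabs_le_between in HC. lra. }
    pose proof (one_sub_le_exp_neg_lcoord (z n) (Hz n)). lra.
  - replace (Finite 1) with (Finite (1 - 2 * exp C * (1 - 1))) by (f_equal; ring).
    apply is_lim_seq_minus'; [apply is_lim_seq_const|].
    apply is_lim_seq_mult'; [apply is_lim_seq_const|].
    apply is_lim_seq_minus'; [apply is_lim_seq_const | exact Hlim].
  - apply is_lim_seq_const.
Qed.

Lemma is_lim_seq_unit_of_lcoord_close (z w : nat -> R) (C l : R) : Rabs l = 1 ->
  (forall n, Rabs (z n) < 1) -> (forall n, Rabs (w n) < 1) ->
  (forall n, Rabs (lcoord (z n) - lcoord (w n)) <= C) ->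
  is_lim_seq w l -> is_lim_seq z l.
Proof.
  intros Hl Hz Hw HC Hlim. destruct (Rle_dec 0 l) as [Hl0 | Hl0].
  - rewrite Rabs_pos_eq in Hl by lra. subst l.
    exact (is_lim_seq_1_of_lcoord_close z w C Hz Hw HC Hlim).
  - rewrite Rabs_left in Hl by lra. replace l with (- 1) in * by lra.
    assert (Hopp : is_lim_seq (fun n => - z n) 1).
    { apply (is_lim_seq_1_of_lcoord_close _ (fun n => - w n) C).
      - intros n. rewrite Rabs_Ropp. apply Hz.
      - intros n. rewrite Rabs_Ropp. apply Hw.
      - intros n. rewrite !lcoord_opp, <- Rabs_Ropp.
        replace (- (- lcoord (z n) - - lcoord (w n))) with (lcoord (z n) - lcoord (w n)) by ring.
        apply HC.
      - replace (Finite 1) with (Rbar_opp (-1)) by (simpl; f_equal; ring).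
        exact (proj1 (is_lim_seq_opp w (-1)) Hlim). }
    apply (is_lim_seq_opp _ 1) in Hopp.
    replace (Finite (-1)) with (Rbar_opp 1) by reflexivity.
    apply (is_lim_seq_ext (fun n => - - z n)); [intros n; apply Ropp_involutive | exact Hopp].
Qed.

Lemma Series_ge_term (e : nat -> R) (N : nat) :
  (forall n, 0 <= e n) -> ex_series e -> e N <= Series e.
Proof.
  intros He Hex.
  assert (Hpartial : sum_f_R0 e N <= Series e).
  { apply sum_incr; [apply is_series_Reals, Series_correct, Hex | exact He]. }
  destruct N as [|N]; simpl in Hpartial; [exact Hpartial|].
  pose proof (cond_pos_sum e N He). lra.
Qed.

Lemma is_series_tail (c : nat -> R) : ex_series c ->
  is_series (fun n => c (S n)) (Series c - c O).
Proof.
  intros Hex. apply is_series_incr_1.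
  unfold plus; simpl. replace (Series c - c O + c O) with (Series c) by ring.
  apply Series_correct, Hex.
Qed.

Lemma CV_radius_ge_1 (c : nat -> R) (M : R) : (forall k, Rabs (c k) <= M) ->
  Rbar_le 1 (CV_radius c).
Proof.
  intros Hc. apply (proj1 (CV_radius_bounded c)).
  exists M. intros n. rewrite pow1, Rmult_1_r. apply Hc.
Qed.

Lemma ex_series_PSeries_of_lt_1 (c : nat -> R) (r : R) : Rbar_le 1 (CV_radius c) -> 0 <= r < 1 ->
  ex_series (fun k => c k * r ^ k).
Proof.
  intros Hc Hr. apply ex_series_Rabs, CV_disk_inside.
  apply Rbar_lt_le_trans with 1; [simpl; rewrite Rabs_pos_eq; lra | exact Hc].
Qed.

Lemma Rabs_PSeries_le (c : nat -> R) (x : R) : Rbar_lt (Rabs x) (CV_radius c) ->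
  Rabs (PSeries c x) <= PSeries (fun k => Rabs (c k)) (Rabs x).
Proof.
  intros Hx. unfold PSeries. eapply Rle_trans; [apply Series_Rabs, CV_disk_inside, Hx|].
  right. apply Series_ext. intros n. rewrite Rabs_mult, RPow_abs. reflexivity.
Qed.

Lemma Rabs_PS_derive (c : nat -> R) (k : nat) :
  Rabs (PS_derive c k) = PS_derive (fun k => Rabs (c k)) k.
Proof.
  unfold PS_derive. rewrite Rabs_mult, (Rabs_pos_eq (INR _)) by apply pos_INR. reflexivity.
Qed.

(* [f(1) - f(r) - f'(r) (1 - r)] for [f(x) = x^(n+1)]: nonnegative by convexity. *)
Definition convexity_gap (r : R) (n : nat) : R := 1 - r ^ S n - INR (S n) * r ^ n * (1 - r).

Lemma convexity_gap_S (r : R) (n : nat) :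
  convexity_gap r (S n) = convexity_gap r n + INR (S n) * r ^ n * (1 - r) ^ 2.
Proof. unfold convexity_gap. rewrite (S_INR (S n)). simpl. ring. Qed.

Lemma convexity_gap_0 (r : R) : convexity_gap r 0 = 0.
Proof. unfold convexity_gap. simpl. ring. Qed.

Lemma convexity_gap_le_S (r : R) (n : nat) : 0 <= r -> convexity_gap r n <= convexity_gap r (S n).
Proof.
  intros Hr. rewrite convexity_gap_S.
  pose proof (pos_INR (S n)). pose proof (pow_le r n Hr). pose proof (pow2_ge_0 (1 - r)).
  assert (0 <= INR (S n) * r ^ n * (1 - r) ^ 2)
    by (apply Rmult_le_pos; [apply Rmult_le_pos|]; assumption).
  lra.
Qed.

Lemma convexity_gap_ge_0 (r : R) (n : nat) : 0 <= r -> 0 <= convexity_gap r n.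
Proof.
  intros Hr. induction n as [|n IH].
  - rewrite convexity_gap_0. lra.
  - pose proof (convexity_gap_le_S r n Hr). lra.
Qed.

Lemma convexity_gap_ge_sq (r : R) (n : nat) : 0 <= r -> (1 - r) ^ 2 <= convexity_gap r (S n).
Proof.
  intros Hr. induction n as [|n IH].
  - rewrite convexity_gap_S, convexity_gap_0. simpl. lra.
  - pose proof (convexity_gap_le_S r (S n) Hr). lra.
Qed.

Section NonnegativeCoefficients.

Variable b : nat -> R.
Hypothesis b_nonneg : forall k, 0 <= b k.
Hypothesis b_summable : ex_series b.

Lemma CV_radius_ge_1_of_summable : Rbar_le 1 (CV_radius b).
Proof.
  apply (CV_radius_ge_1 b (Series b)). intros k.
  rewrite Rabs_pos_eq by apply b_nonneg. apply Series_ge_term; assumption.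
Qed.

Variable r : R.
Hypothesis r_range : 0 <= r < 1.

Lemma PSeries_le_head : PSeries b r <= b O + r * (Series b - b O).
Proof.
  pose proof (ex_series_PSeries_of_lt_1 b r CV_radius_ge_1_of_summable r_range) as Hex.
  rewrite <- (is_series_unique _ _ (is_series_tail b b_summable)).
  unfold PSeries. rewrite Series_incr_1 by exact Hex. simpl. rewrite Rmult_1_r.
  apply Rplus_le_compat_l. rewrite <- Series_scal_l.
  apply Series_le.
  - intros n. pose proof (b_nonneg (S n)). pose proof (pow_le r n (proj1 r_range)).
    assert (r ^ n <= 1) by (rewrite <- (pow1 n); apply pow_incr; lra).
    assert (0 <= r * b (S n) * (1 - r ^ n)) by (apply Rmult_le_pos; [apply Rmult_le_pos|]; lra).
    simpl. split; [apply Rmult_le_pos; [|apply Rmult_le_pos]; lra | nra].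
  - apply (ex_series_scal_l r (fun n => b (S n))). eexists. apply is_series_tail, b_summable.
Qed.

Lemma PSeries_derive_gap (m : nat) : (2 <= m)%nat ->
  PSeries (PS_derive b) r * (1 - r) + b m * (1 - r) ^ 2 <= Series b - PSeries b r.
Proof.
  intros Hm.
  set (e := fun n => b (S n) * convexity_gap r n).
  assert (He : is_series e (Series b - PSeries b r - PSeries (PS_derive b) r * (1 - r))).
  { pose proof (is_series_tail b b_summable) as Hb.
    pose proof (is_series_tail _ (ex_series_PSeries_of_lt_1 b r CV_radius_ge_1_of_summable r_range))
      as Hq.
    assert (Hq' : is_series (fun n => PS_derive b n * r ^ n) (PSeries (PS_derive b) r)).
    { apply Series_correct, ex_series_PSeries_of_lt_1; [|exact r_range].
      rewrite CV_radius_derive. exact CV_radius_ge_1_of_summable. }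
    pose proof (is_series_minus _ _ _ _ (is_series_minus _ _ _ _ Hb Hq)
      (is_series_scal_r (1 - r) _ _ Hq')) as Hdiff.
    replace (Series b - PSeries b r - PSeries (PS_derive b) r * (1 - r))
      with (plus (plus (Series b - b O) (opp (PSeries b r - b O * r ^ O)))
              (opp (PSeries (PS_derive b) r * (1 - r))))
      by (unfold plus, opp; simpl; ring).
    eapply is_series_ext; [|exact Hdiff].
    intros n. unfold e, convexity_gap, PS_derive, plus, opp. simpl. ring. }
  assert (Hterm : b m * (1 - r) ^ 2 <= e (pred m)).
  { unfold e. replace (S (pred m)) with m by lia. replace (pred m) with (S (m - 2)) by lia.
    apply Rmult_le_compat_l; [apply b_nonneg | apply convexity_gap_ge_sq, r_range]. }
  pose proof (Series_ge_term e (pred m)) as Hsum.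
  rewrite (is_series_unique _ _ He) in Hsum.
  assert (e (pred m) <= Series b - PSeries b r - PSeries (PS_derive b) r * (1 - r)).
  { apply Hsum; [|eexists; exact He].
    intros n. apply Rmult_le_pos; [apply b_nonneg | apply convexity_gap_ge_0, r_range]. }
  lra.
Qed.

End NonnegativeCoefficients.

Section Iteration.

Variable a : nat -> R.
Hypothesis a_bound : forall i, -1 < a i < 1.
Hypothesis abs_a_summable : ex_series (fun i => Rabs (a i)).
Hypothesis abs_a_sum_le_1 : Series (fun i => Rabs (a i)) <= 1.

Lemma Rabs_lt_CV_radius (x : R) : Rabs x < 1 -> Rbar_lt (Rabs x) (CV_radius a).
Proof.
  intros Hx. apply Rbar_lt_le_trans with 1; [exact Hx|].
  apply (CV_radius_ge_1 a 1). intros k. apply Rabs_le. specialize (a_bound k). lra.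
Qed.

Lemma Rabs_PSeries_lt_1 (u : R) : Rabs u < 1 -> Rabs (PSeries a u) < 1.
Proof.
  intros Hu. pose proof (Rabs_pos u) as Hu0.
  pose proof (Rabs_PSeries_le a u (Rabs_lt_CV_radius u Hu)).
  pose proof (PSeries_le_head _ (fun k => Rabs_pos (a k)) abs_a_summable (Rabs u) (conj Hu0 Hu)).
  assert (Ha0 : Rabs (a O) < 1) by (apply Rabs_def1; apply a_bound).
  assert (Rabs u * (Series (fun i => Rabs (a i)) - Rabs (a O)) <= Rabs u * (1 - Rabs (a O)))
    by (apply Rmult_le_compat_l; lra).
  assert (0 < (1 - Rabs u) * (1 - Rabs (a O))) by (apply Rmult_lt_0_compat; lra).
  lra.
Qed.

Lemma PSeries_derive_bound (u : R) (m : nat) : (2 <= m)%nat -> Rabs u < 1 ->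
  Rabs (PSeries (PS_derive a) u) * (1 - Rabs u) + Rabs (a m) * (1 - Rabs u) ^ 2
    <= 1 - Rabs (PSeries a u).
Proof.
  intros Hm Hu. pose proof (Rabs_pos u) as Hu0.
  assert (Hder : Rabs (PSeries (PS_derive a) u)
                 <= PSeries (PS_derive (fun k => Rabs (a k))) (Rabs u)).
  { rewrite <- (PSeries_ext _ _ _ (Rabs_PS_derive a)).
    apply Rabs_PSeries_le. rewrite CV_radius_derive. apply Rabs_lt_CV_radius, Hu. }
  pose proof (Rabs_PSeries_le a u (Rabs_lt_CV_radius u Hu)).
  pose proof (PSeries_derive_gap _ (fun k => Rabs_pos (a k)) abs_a_summable (Rabs u)
    (conj Hu0 Hu) m Hm).
  assert (Rabs (PSeries (PS_derive a) u) * (1 - Rabs u)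
          <= PSeries (PS_derive (fun k => Rabs (a k))) (Rabs u) * (1 - Rabs u))
    by (apply Rmult_le_compat_r; lra).
  lra.
Qed.

Lemma is_derive_lcoord_PSeries (s : R) : Rabs s < 1 ->
  is_derive (fun t => lcoord (PSeries a t)) s
    (PSeries (PS_derive a) s * / (1 - Rabs (PSeries a s))).
Proof.
  intros Hs. apply (is_derive_comp lcoord (PSeries a)).
  - apply is_derive_lcoord, Rabs_PSeries_lt_1, Hs.
  - apply is_derive_PSeries, Rabs_lt_CV_radius, Hs.
Qed.

Lemma lcoord_PSeries_derive_bound (R0 s : R) (m : nat) : (2 <= m)%nat -> R0 < 1 -> Rabs s <= R0 ->
  Rabs (PSeries (PS_derive a) s * / (1 - Rabs (PSeries a s)))
    <= (1 - Rabs (a m) * (1 - R0) ^ 2) * / (1 - Rabs s).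
Proof.
  intros Hm HR0 Hs.
  pose proof (PSeries_derive_bound s m Hm ltac:(lra)) as Hbound.
  pose proof (Rabs_PSeries_lt_1 s ltac:(lra)). pose proof (Rabs_pos (PSeries a s)).
  pose proof (Rabs_pos s). pose proof (Rabs_pos (a m)).
  set (c := Rabs (a m) * (1 - R0) ^ 2).
  assert (Hc : c <= Rabs (a m) * (1 - Rabs s) ^ 2).
  { apply Rmult_le_compat_l; [lra|]. apply pow_incr. lra. }
  assert (0 <= c) by (apply Rmult_le_pos; [lra | apply pow2_ge_0]).
  assert (HM : 0 < 1 - Rabs (PSeries a s) <= 1) by lra.
  assert (c * (1 - Rabs (PSeries a s)) <= c * 1) by (apply Rmult_le_compat_l; lra).
  rewrite Rabs_mult, Rabs_inv, (Rabs_pos_eq (1 - Rabs (PSeries a s))) by lra.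
  apply Rmult_inv_le_cross; lra.
Qed.

Lemma lcoord_PSeries_contraction (R0 x y : R) (m : nat) : (2 <= m)%nat -> R0 < 1 ->
  Rabs x <= R0 -> Rabs y <= R0 ->
  Rabs (lcoord (PSeries a x) - lcoord (PSeries a y))
    <= (1 - Rabs (a m) * (1 - R0) ^ 2) * Rabs (lcoord x - lcoord y).
Proof.
  intros Hm HR0.
  assert (Hordered : forall x y, y <= x -> Rabs x <= R0 -> Rabs y <= R0 ->
    Rabs (lcoord (PSeries a x) - lcoord (PSeries a y))
      <= (1 - Rabs (a m) * (1 - R0) ^ 2) * Rabs (lcoord x - lcoord y)).
  { intros x' y' Hyx Hx Hy. apply Rabs_le_between in Hx. apply Rabs_le_between in Hy.
    rewrite (Rabs_pos_eq (lcoord x' - lcoord y'))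
      by (pose proof (lcoord_expanding x' y' ltac:(lra) Hyx ltac:(lra)); lra).
    apply (Rabs_sub_le_of_derive lcoord (fun t => lcoord (PSeries a t)) (fun s => / (1 - Rabs s))
      (fun s => PSeries (PS_derive a) s * / (1 - Rabs (PSeries a s))) _ y' x' Hyx).
    intros s Hs. assert (Habs : Rabs s <= R0) by (apply Rabs_le; lra). split; [|split].
    - apply is_derive_lcoord. lra.
    - apply is_derive_lcoord_PSeries. lra.
    - apply lcoord_PSeries_derive_bound; assumption. }
  intros Hx Hy. destruct (Rle_dec y x) as [Hyx | Hxy].
  - apply Hordered; assumption.
  - rewrite Rabs_minus_sym, (Rabs_minus_sym (lcoord x)). apply Hordered; [lra | assumption..].
Qed.

Lemma lcoord_PSeries_nonexpanding (x y : R) : Rabs x < 1 -> Rabs y < 1 ->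
  Rabs (lcoord (PSeries a x) - lcoord (PSeries a y)) <= Rabs (lcoord x - lcoord y).
Proof.
  intros Hx Hy. set (R0 := Rmax (Rabs x) (Rabs y)).
  assert (HR0 : 0 <= R0 < 1).
  { split; [apply Rle_trans with (Rabs x); [apply Rabs_pos | apply Rmax_l]|].
    apply Rmax_lub_lt; assumption. }
  pose proof (lcoord_PSeries_contraction R0 x y 2 (le_n 2) (proj2 HR0) (Rmax_l _ _) (Rmax_r _ _)).
  assert (0 <= Rabs (a 2%nat) * (1 - R0) ^ 2)
    by (apply Rmult_le_pos; [apply Rabs_pos | apply pow2_ge_0]).
  pose proof (Rabs_pos (lcoord x - lcoord y)). nra.
Qed.

Lemma piter_S (n : nat) (x : R) : piter a (S n) x = PSeries a (piter a n x).
Proof. reflexivity. Qed.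

Lemma Rabs_piter_lt_1 (n : nat) (x : R) : Rabs x < 1 -> Rabs (piter a n x) < 1.
Proof.
  intros Hx. induction n as [|n IH]; [exact Hx|].
  rewrite piter_S. apply Rabs_PSeries_lt_1, IH.
Qed.

Lemma lcoord_piter_nonexpanding (n : nat) (x y : R) : Rabs x < 1 -> Rabs y < 1 ->
  Rabs (lcoord (piter a n x) - lcoord (piter a n y)) <= Rabs (lcoord x - lcoord y).
Proof.
  intros Hx Hy. induction n as [|n IH]; [apply Rle_refl|].
  rewrite !piter_S. eapply Rle_trans; [|exact IH].
  apply lcoord_PSeries_nonexpanding; apply Rabs_piter_lt_1; assumption.
Qed.

Lemma Rabs_le_1_of_is_lim_seq_piter (y l : R) : Rabs y < 1 ->
  is_lim_seq (fun n => piter a n y) l -> Rabs l <= 1.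
Proof.
  intros Hy Hlim.
  apply (is_lim_seq_le (fun n => Rabs (piter a n y)) (fun _ => 1) (Rbar_abs l) 1).
  - intros n. left. apply Rabs_piter_lt_1, Hy.
  - apply is_lim_seq_abs, Hlim.
  - apply is_lim_seq_const.
Qed.

Lemma is_lim_seq_piter_unit (x y l : R) : Rabs x < 1 -> Rabs y < 1 -> Rabs l = 1 ->
  is_lim_seq (fun n => piter a n y) l -> is_lim_seq (fun n => piter a n x) l.
Proof.
  intros Hx Hy Hl.
  apply (is_lim_seq_unit_of_lcoord_close _ _ (Rabs (lcoord x - lcoord y)) l Hl).
  - intros n. apply Rabs_piter_lt_1, Hx.
  - intros n. apply Rabs_piter_lt_1, Hy.
  - intros n. apply lcoord_piter_nonexpanding; assumption.
Qed.

Lemma piter_eventually_bounded (x y l : R) : Rabs x < 1 -> Rabs y < 1 -> Rabs l < 1 ->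
  is_lim_seq (fun n => piter a n y) l ->
  exists R0 N, R0 < 1 /\ forall n, (N <= n)%nat ->
    Rabs (piter a n x) <= R0 /\ Rabs (piter a n y) <= R0.
Proof.
  intros Hx Hy Hl Hlim.
  set (R1 := (1 + Rabs l) / 2).
  set (K := - ln (1 - R1) + Rabs (lcoord x - lcoord y)).
  assert (Heps : 0 < (1 - Rabs l) / 2) by lra.
  destruct (proj2 (is_lim_seq_spec _ _) Hlim (mkposreal _ Heps)) as [N HN].
  exists (1 - exp (- K)), N. split; [pose proof (exp_pos (- K)); lra|].
  intros n Hn. specialize (HN n Hn). simpl in HN.
  pose proof (Rabs_piter_lt_1 n x Hx) as Hxn. pose proof (Rabs_piter_lt_1 n y Hy) as Hyn.
  assert (Hw : Rabs (piter a n y) <= R1).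
  { pose proof (Rabs_triang_inv (piter a n y) l). unfold R1. lra. }
  assert (Hlw : Rabs (lcoord (piter a n y)) <= - ln (1 - R1)).
  { rewrite Rabs_lcoord by exact Hyn. apply Ropp_le_contravar, ln_le; unfold R1 in *; lra. }
  pose proof (lcoord_piter_nonexpanding n x y Hx Hy).
  pose proof (Rabs_triang_inv (lcoord (piter a n x)) (lcoord (piter a n y))).
  pose proof (Rabs_pos (lcoord x - lcoord y)).
  split; apply Rabs_le_of_Rabs_lcoord_le; try assumption; unfold K; lra.
Qed.

Lemma is_lim_seq_piter_sub_nonaffine (x y l : R) (m : nat) : Rabs x < 1 -> Rabs y < 1 ->
  Rabs l < 1 -> (2 <= m)%nat -> a m <> 0 -> is_lim_seq (fun n => piter a n y) l ->
  is_lim_seq (fun n => piter a n x - piter a n y) 0.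
Proof.
  intros Hx Hy Hl Hm Ham Hlim.
  destruct (piter_eventually_bounded x y l Hx Hy Hl Hlim) as (R0 & N & HR0 & Hbound).
  assert (HR0pos : 0 <= R0) by (eapply Rle_trans; [apply Rabs_pos | apply (Hbound N (le_n N))]).
  set (c := Rabs (a m) * (1 - R0) ^ 2).
  assert (Hc : 0 < c < 1).
  { assert (Rabs (a m) < 1) by (apply Rabs_lt_between; apply a_bound).
    assert (0 < Rabs (a m)) by (apply Rabs_pos_lt, Ham).
    assert (0 < (1 - R0) ^ 2 <= 1) by (simpl; split; nra).
    unfold c. split; [apply Rmult_lt_0_compat|]; nra. }
  set (d := fun n => Rabs (lcoord (piter a n x) - lcoord (piter a n y))).
  assert (Hd : is_lim_seq d 0).
  { apply (is_lim_seq_of_contracting d (1 - c) N); [lra | intros n; apply Rabs_pos|].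
    intros n Hn. destruct (Hbound n Hn) as [Hxn Hyn]. unfold d. rewrite !piter_S.
    apply (lcoord_PSeries_contraction R0 _ _ m); assumption. }
  apply is_lim_seq_abs_0, (is_lim_seq_le_le (fun _ => 0) _ d 0);
    [|apply is_lim_seq_const | exact Hd].
  intros n. split; [apply Rabs_pos|].
  apply Rabs_sub_le_lcoord; apply Rabs_piter_lt_1; assumption.
Qed.

Lemma PSeries_affine (x : R) : (forall k, (2 <= k)%nat -> a k = 0) -> Rabs x < 1 ->
  PSeries a x = a O + a 1%nat * x.
Proof.
  intros Haff Hx. unfold PSeries.
  assert (Hex : ex_series (fun k => a k * x ^ k))
    by (apply ex_series_Rabs, CV_disk_inside, Rabs_lt_CV_radius, Hx).
  rewrite Series_incr_1 by exact Hex.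
  rewrite Series_incr_1 by exact (proj1 (ex_series_incr_1 _) Hex).
  rewrite (Series_ext _ (fun _ => 0 * 1)) by (intros n; rewrite Haff by lia; ring).
  rewrite (Series_scal_l 0 (fun _ => 1)). simpl. ring.
Qed.

Lemma is_lim_seq_piter_sub_affine (x y : R) : Rabs x < 1 -> Rabs y < 1 ->
  (forall k, (2 <= k)%nat -> a k = 0) ->
  is_lim_seq (fun n => piter a n x - piter a n y) 0.
Proof.
  intros Hx Hy Haff.
  assert (Hsub : forall n, piter a n x - piter a n y = (x - y) * a 1%nat ^ n).
  { induction n as [|n IH]; [simpl; ring|].
    rewrite !piter_S, !PSeries_affine by (assumption || apply Rabs_piter_lt_1; assumption).
    simpl. replace (a O + a 1%nat * piter a n x - (a O + a 1%nat * piter a n y))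
      with (a 1%nat * (piter a n x - piter a n y)) by ring.
    rewrite IH. ring. }
  apply (is_lim_seq_ext (fun n => (x - y) * a 1%nat ^ n)); [intros n; symmetry; apply Hsub|].
  replace (Finite 0) with (Rbar_mult (x - y) 0) by (simpl; f_equal; ring).
  apply is_lim_seq_scal_l, is_lim_seq_geom, Rabs_lt_between, a_bound.
Qed.

Lemma is_lim_seq_piter_interior (x y l : R) : Rabs x < 1 -> Rabs y < 1 -> Rabs l < 1 ->
  is_lim_seq (fun n => piter a n y) l -> is_lim_seq (fun n => piter a n x) l.
Proof.
  intros Hx Hy Hl Hlim.
  assert (Hsub : is_lim_seq (fun n => piter a n x - piter a n y) 0).
  { destruct (classic (exists m, (2 <= m)%nat /\ a m <> 0)) as [[m [Hm Ham]] | Hnone].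
    - exact (is_lim_seq_piter_sub_nonaffine x y l m Hx Hy Hl Hm Ham Hlim).
    - apply is_lim_seq_piter_sub_affine; [assumption | assumption |].
      intros k Hk. apply NNPP. intros Hak. apply Hnone. exists k. split; assumption. }
  replace (Finite l) with (Finite (0 + l)) by (f_equal; ring).
  apply (is_lim_seq_ext (fun n => (piter a n x - piter a n y) + piter a n y));
    [intros n; ring | exact (is_lim_seq_plus' _ _ _ _ Hsub Hlim)].
Qed.

End Iteration.

Theorem corollary3 (a : nat -> R) (lim0 : R)
  (Ha : forall i, -1 < a i < 1)
  (Hsum : ex_series (fun i => Rabs (a i)))
  (Hle : Series (fun i => Rabs (a i)) <= 1)
  (Hlim : is_lim_seq (fun n => piter a (S n) 0) lim0) :
  forall t, -1 < t < 1 -> is_lim_seq (fun n => piter a (S n) t) lim0.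
Proof.
  intros t Ht.
  assert (Ht1 : Rabs t < 1) by (apply Rabs_lt_between; lra).
  assert (H01 : Rabs 0 < 1) by (rewrite Rabs_R0; lra).
  apply (is_lim_seq_incr_1 (fun n => piter a n 0)) in Hlim.
  apply (is_lim_seq_incr_1 (fun n => piter a n t)).
  destruct (Rle_lt_or_eq_dec _ _ (Rabs_le_1_of_is_lim_seq_piter a Ha Hsum Hle 0 lim0 H01 Hlim))
    as [Hinterior | Hunit].
  - exact (is_lim_seq_piter_interior a Ha Hsum Hle t 0 lim0 Ht1 H01 Hinterior Hlim).
  - exact (is_lim_seq_piter_unit a Ha Hsum Hle t 0 lim0 Ht1 H01 Hunit Hlim).
Qed.
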